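(* There exists $r_0>0$ such that for every $0\le r\le r_0$, \[ F(\beta)=\int_0^\beta (r^2+2\sin^2y)^{1/2}\Bigl(\frac34-\sin^2y\Bigr)dy\ \ge\ 0\qquad\text{for all }\beta\ge0. \] Moreover, if $0<r\le r_0$, then $F(\beta)=0$ (for $\beta\ge0$) if and only if $\beta=0$. *)

From Stdlib Require Import Reals.
From Coquelicot Require Import Coquelicot.
Open Scope R_scope.

Definition integrand (r y : R) : R :=
  sqrt (r ^ 2 + 2 * (sin y) ^ 2) * (3 / 4 - (sin y) ^ 2).

Definition F (r beta : R) : R := RInt (integrand r) 0 beta.

(* The second factor 3/4 - sin^2 y = cos^2 y - 1/4 is nonnegative on [0, pi/3] and
   [2pi/3, pi] and nonpositive on [pi/3, 2pi/3], so on [pi/3, pi] the integral F is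
   smallest at 2pi/3.  On [0, 2pi/3] the integrand is bounded below by functions with
   explicit primitives, since sqrt (r^2 + 2 s^2) >= sqrt 2 s + r^2/4 where s^2 <= 3/4
   and sqrt (r^2 + 2 s^2) <= sqrt 2 s + r^2/2 where s^2 >= 3/4 (there the second
   factor is negative); the sqrt 2 terms cancel and F (2pi/3) >= r^2 (2pi - 3 sqrt 3)/32,
   which is positive for 0 < r <= 1.  The integrand has period pi, so
   F (beta + pi) = F pi + F beta carries the sign of F from [0, pi] to all beta >= 0. *)
From Stdlib Require Import Reals Lra Psatz.
From Coquelicot Require Import Coquelicot.
Open Scope R_scope.

Lemma RInt_shift_period (f : R -> R) (T a b : R) :
  (forall x, f (x + T) = f x) -> ex_RInt f (a + T) (b + T) ->
  RInt f (a + T) (b + T) = RInt f a b.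
Proof.
  intros f_per f_int.
  pose proof (RInt_comp_lin f 1 T a b) as shift.
  rewrite !Rmult_1_l in shift; rewrite <- (shift f_int).
  apply RInt_ext; intros x _.
  rewrite !Rmult_1_l; apply f_per.
Qed.

Lemma RInt_le_0 (f : R -> R) (a b : R) :
  a <= b -> ex_RInt f a b -> (forall x, a < x < b -> f x <= 0) -> RInt f a b <= 0.
Proof.
  intros a_le_b f_int f_nonpos.
  assert (RInt_opp_f : RInt (fun x => - f x) a b = - RInt f a b)
    by exact (RInt_opp f a b f_int).
  assert (0 <= RInt (fun x => - f x) a b); [|lra].
  apply RInt_ge_0; [lra | exact (ex_RInt_opp f a b f_int) |].
  intros x x_range; specialize (f_nonpos x x_range); lra.
Qed.

Lemma closed_of_period_increment (G : R -> R) (T : R) (P : R -> Prop) :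
  0 < T -> (forall b, G (b + T) = G T + G b) ->
  (forall x y, P x -> P y -> P (x + y)) ->
  (forall b, 0 < b <= T -> P (G b)) ->
  forall b, 0 < b -> P (G b).
Proof.
  intros T_pos G_incr P_add P_base.
  assert (on_multiples : forall n b, 0 < b <= INR (S n) * T -> P (G b)).
  { induction n as [|n IH]; intros b b_range.
    - apply P_base; simpl in b_range; lra.
    - destruct (Rle_lt_dec b T) as [b_le | b_gt]; [apply P_base; lra|].
      replace b with ((b - T) + T) by ring.
      rewrite G_incr; apply P_add; [apply P_base; lra|].
      apply IH; rewrite S_INR in b_range; lra. }
  intros b b_pos.
  destruct (INR_archimed T b T_pos) as [n n_large].
  apply (on_multiples n); rewrite S_INR; lra.
Qed.

Lemma integrand_continuous (r y : R) : continuous (integrand r) y.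
Proof.
  apply continuity_pt_filterlim; unfold integrand.
  apply continuity_pt_mult.
  - apply (continuity_pt_comp (fun y => r ^ 2 + 2 * sin y ^ 2) sqrt).
    + apply derivable_continuous_pt; reg.
    + apply continuity_pt_sqrt; nra.
  - apply derivable_continuous_pt; reg.
Qed.

Lemma ex_RInt_integrand (r a b : R) : ex_RInt (integrand r) a b.
Proof.
  apply (@ex_RInt_continuous R_CompleteNormedModule).
  intros; apply integrand_continuous.
Qed.

Lemma F_Chasles (r a b : R) : F r b = F r a + RInt (integrand r) a b.
Proof.
  unfold F; symmetry.
  apply (RInt_Chasles (integrand r)); apply ex_RInt_integrand.
Qed.

Lemma integrand_add_PI (r y : R) : integrand r (y + PI) = integrand r y.
Proof.
  unfold integrand; rewrite neg_sin.
  now replace ((- sin y) ^ 2) with (sin y ^ 2) by ring.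
Qed.

Lemma F_add_PI (r b : R) : F r (b + PI) = F r PI + F r b.
Proof.
  rewrite (F_Chasles r PI); f_equal.
  rewrite <- (Rplus_0_l PI) at 1.
  apply RInt_shift_period; [apply integrand_add_PI | apply ex_RInt_integrand].
Qed.

Lemma three_quarters_sub_sin2 (y : R) : 3 / 4 - sin y ^ 2 = cos y ^ 2 - 1 / 4.
Proof. pose proof (sin2_cos2 y) as sc; unfold Rsqr in sc; nra. Qed.

Lemma integrand_nonneg (r y : R) : 1 / 4 <= cos y ^ 2 -> 0 <= integrand r y.
Proof.
  intros cos_large; unfold integrand; rewrite three_quarters_sub_sin2.
  apply Rmult_le_pos; [apply sqrt_pos | lra].
Qed.

Lemma integrand_nonpos (r y : R) : cos y ^ 2 <= 1 / 4 -> integrand r y <= 0.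
Proof.
  intros cos_small; unfold integrand; rewrite three_quarters_sub_sin2.
  pose proof (sqrt_pos (r ^ 2 + 2 * sin y ^ 2)); nra.
Qed.

Lemma integrand_pos (r y : R) : 0 < r -> 1 / 4 < cos y ^ 2 -> 0 < integrand r y.
Proof.
  intros r_pos cos_large; unfold integrand; rewrite three_quarters_sub_sin2.
  apply Rmult_lt_0_compat; [apply sqrt_lt_R0; nra | lra].
Qed.

Lemma cos_2PI3 : cos (2 * PI / 3) = - 1 / 2.
Proof.
  replace (2 * PI / 3) with (PI - PI / 3) by field.
  rewrite Rtrigo_facts.cos_pi_minus, cos_PI3; lra.
Qed.

Lemma sin_2PI3 : sin (2 * PI / 3) = sqrt 3 / 2.
Proof.
  replace (2 * PI / 3) with (PI - PI / 3) by field.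
  rewrite sin_PI_x, sin_PI3; lra.
Qed.

Lemma cos_gt_half (y : R) : 0 <= y < PI / 3 -> 1 / 2 < cos y.
Proof.
  intros y_range; pose proof PI_RGT_0.
  rewrite <- cos_PI3; apply cos_decreasing_1; lra.
Qed.

Lemma cos_ge_half (y : R) : 0 <= y <= PI / 3 -> 1 / 2 <= cos y.
Proof.
  intros y_range; pose proof PI_RGT_0.
  rewrite <- cos_PI3; apply cos_decr_1; lra.
Qed.

Lemma cos_between_halves (y : R) :
  PI / 3 <= y <= 2 * PI / 3 -> - 1 / 2 <= cos y <= 1 / 2.
Proof.
  intros y_range; pose proof PI_RGT_0; split.
  - rewrite <- cos_2PI3; apply cos_decr_1; lra.
  - rewrite <- cos_PI3; apply cos_decr_1; lra.
Qed.

Lemma cos_le_neg_half (y : R) : 2 * PI / 3 <= y <= PI -> cos y <= - 1 / 2.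
Proof.
  intros y_range; pose proof PI_RGT_0.
  rewrite <- cos_2PI3; apply cos_decr_1; lra.
Qed.

Lemma sqrt2_sqr : sqrt 2 * sqrt 2 = 2.
Proof. apply sqrt_sqrt; lra. Qed.

Lemma sqrt2_le : sqrt 2 <= 3 / 2.
Proof. pose proof sqrt2_sqr; pose proof (sqrt_pos 2); nra. Qed.

Lemma sqrt_ge_sqrt2_add (r s : R) : 0 <= r <= 1 -> 0 <= s -> s ^ 2 <= 3 / 4 ->
  sqrt 2 * s + r ^ 2 / 4 <= sqrt (r ^ 2 + 2 * s ^ 2).
Proof.
  intros r_range s_pos s_small.
  pose proof sqrt2_sqr; pose proof sqrt2_le; pose proof (sqrt_pos 2).
  rewrite <- (sqrt_pow2 (sqrt 2 * s + r ^ 2 / 4)) by nra.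
  apply sqrt_le_1_alt.
  assert (sqrt 2 * s <= 3 / 2) by nra.
  assert (0 <= r ^ 2 <= 1) by nra.
  assert (r ^ 2 * (sqrt 2 * s) <= r ^ 2 * (3 / 2)) by nra.
  assert (r ^ 2 * r ^ 2 <= r ^ 2) by nra.
  replace ((sqrt 2 * s + r ^ 2 / 4) ^ 2)
    with (sqrt 2 * sqrt 2 * s ^ 2 + r ^ 2 * (sqrt 2 * s) / 2 + r ^ 2 * r ^ 2 / 16)
    by field.
  rewrite sqrt2_sqr; lra.
Qed.

Lemma sqrt_le_sqrt2_add (r s : R) : 0 <= s -> 3 / 4 <= s ^ 2 ->
  sqrt (r ^ 2 + 2 * s ^ 2) <= sqrt 2 * s + r ^ 2 / 2.
Proof.
  intros s_pos s_large.
  pose proof sqrt2_sqr; pose proof (sqrt_pos 2).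
  rewrite <- (sqrt_pow2 (sqrt 2 * s + r ^ 2 / 2)) by nra.
  apply sqrt_le_1_alt.
  assert (0 <= sqrt 2 * s) by (apply Rmult_le_pos; lra).
  assert (1 <= sqrt 2 * s).
  { assert (1 <= (sqrt 2 * s) * (sqrt 2 * s)); [|nra].
    replace ((sqrt 2 * s) * (sqrt 2 * s)) with (sqrt 2 * sqrt 2 * s ^ 2) by ring.
    rewrite sqrt2_sqr; lra. }
  assert (0 <= r ^ 2) by nra.
  assert (r ^ 2 <= r ^ 2 * (sqrt 2 * s)) by nra.
  replace ((sqrt 2 * s + r ^ 2 / 2) ^ 2)
    with (sqrt 2 * sqrt 2 * s ^ 2 + r ^ 2 * (sqrt 2 * s) + r ^ 2 * r ^ 2 / 4)
    by field.
  rewrite sqrt2_sqr; nra.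
Qed.

Definition minorant (k r y : R) : R :=
  (sqrt 2 * sin y + k * r ^ 2) * (3 / 4 - sin y ^ 2).

Definition minorant_primitive (k r y : R) : R :=
  sqrt 2 * (- cos y ^ 3 / 3 + cos y / 4) + k * r ^ 2 * (y / 4 + sin y * cos y / 2).

Lemma ex_RInt_minorant (k r a b : R) : ex_RInt (minorant k r) a b.
Proof.
  apply (@ex_RInt_continuous R_CompleteNormedModule); intros y _.
  apply (@ex_derive_continuous R_AbsRing R_NormedModule).
  unfold minorant; auto_derive; auto.
Qed.

Lemma RInt_minorant (k r a b : R) :
  RInt (minorant k r) a b = minorant_primitive k r b - minorant_primitive k r a.
Proof.
  apply is_RInt_unique, (is_RInt_derive (minorant_primitive k r)).
  - intros y _; unfold minorant_primitive, minorant.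
    auto_derive; [auto|].
    rewrite three_quarters_sub_sin2; pose proof (sin2_cos2 y) as sc; unfold Rsqr in sc.
    assert (neg_sin2 : sin y * (1 * - sin y) = cos y ^ 2 - 1) by nra.
    rewrite neg_sin2; field.
  - intros y _; apply (@ex_derive_continuous R_AbsRing R_NormedModule).
    unfold minorant; auto_derive; auto.
Qed.

Lemma minorant_le_integrand_small (r y : R) : 0 <= r <= 1 -> 0 <= sin y ->
  sin y ^ 2 <= 3 / 4 -> minorant (1 / 4) r y <= integrand r y.
Proof.
  intros r_range sin_pos sin_small; unfold minorant, integrand.
  pose proof (sqrt_ge_sqrt2_add r (sin y) r_range sin_pos sin_small); nra.
Qed.

Lemma minorant_le_integrand_large (r y : R) : 0 <= sin y -> 3 / 4 <= sin y ^ 2 ->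
  minorant (1 / 2) r y <= integrand r y.
Proof.
  intros sin_pos sin_large; unfold minorant, integrand.
  pose proof (sqrt_le_sqrt2_add r (sin y) sin_pos sin_large); nra.
Qed.

Lemma sqrt3_lt_2 : sqrt 3 < 2.
Proof.
  rewrite <- (sqrt_pow2 2) by lra.
  apply sqrt_lt_1_alt; lra.
Qed.

Lemma three_sqrt3_lt_2PI : 3 * sqrt 3 < 2 * PI.
Proof. pose proof sqrt3_lt_2; pose proof PI2_3_2; lra. Qed.

Lemma F_2PI3_lower_bound (r : R) : 0 <= r <= 1 ->
  r ^ 2 * (2 * PI - 3 * sqrt 3) / 32 <= F r (2 * PI / 3).
Proof.
  intros r_range; pose proof PI_RGT_0.
  assert (first_third : RInt (minorant (1 / 4) r) 0 (PI / 3) <= F r (PI / 3)).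
  { apply RInt_le; [lra | apply ex_RInt_minorant | apply ex_RInt_integrand |].
    intros y y_range.
    pose proof (cos_ge_half y ltac:(lra)); pose proof (three_quarters_sub_sin2 y).
    apply minorant_le_integrand_small; [lra | apply sin_ge_0; lra | nra]. }
  assert (middle_third : RInt (minorant (1 / 2) r) (PI / 3) (2 * PI / 3)
                         <= RInt (integrand r) (PI / 3) (2 * PI / 3)).
  { apply RInt_le; [lra | apply ex_RInt_minorant | apply ex_RInt_integrand |].
    intros y y_range.
    pose proof (cos_between_halves y ltac:(lra)); pose proof (three_quarters_sub_sin2 y).
    apply minorant_le_integrand_large; [apply sin_ge_0; lra | nra]. }
  rewrite (F_Chasles r (PI / 3)).
  rewrite !RInt_minorant in *; unfold minorant_primitive in *.
  rewrite cos_PI3, sin_PI3, cos_2PI3, sin_2PI3, cos_0, sin_0 in *.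
  lra.
Qed.

Lemma F_2PI3_pos (r : R) : 0 < r <= 1 -> 0 < F r (2 * PI / 3).
Proof.
  intros r_range; pose proof three_sqrt3_lt_2PI.
  assert (0 < r ^ 2 * (2 * PI - 3 * sqrt 3)) by (apply Rmult_lt_0_compat; nra).
  pose proof (F_2PI3_lower_bound r ltac:(lra)); lra.
Qed.

Lemma F_2PI3_nonneg (r : R) : 0 <= r <= 1 -> 0 <= F r (2 * PI / 3).
Proof.
  intros r_range; pose proof three_sqrt3_lt_2PI.
  assert (0 <= r ^ 2 * (2 * PI - 3 * sqrt 3)) by (apply Rmult_le_pos; nra).
  pose proof (F_2PI3_lower_bound r r_range); lra.
Qed.

Lemma F_nonneg_first_third (r b : R) : 0 <= b <= PI / 3 -> 0 <= F r b.
Proof.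
  intros b_range; apply RInt_ge_0; [lra | apply ex_RInt_integrand |].
  intros y y_range; apply integrand_nonneg.
  pose proof (cos_ge_half y ltac:(lra)); nra.
Qed.

Lemma F_pos_first_third (r b : R) : 0 < r -> 0 < b <= PI / 3 -> 0 < F r b.
Proof.
  intros r_pos b_range; apply RInt_gt_0; [lra | | intros; apply integrand_continuous].
  intros y y_range; apply integrand_pos; [exact r_pos|].
  pose proof (cos_gt_half y ltac:(lra)); nra.
Qed.

Lemma F_ge_F_2PI3 (r b : R) : PI / 3 <= b <= PI -> F r (2 * PI / 3) <= F r b.
Proof.
  intros b_range.
  destruct (Rle_lt_dec b (2 * PI / 3)) as [b_le | b_gt].
  - rewrite (F_Chasles r b (2 * PI / 3)).
    assert (RInt (integrand r) b (2 * PI / 3) <= 0); [|lra].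
    apply RInt_le_0; [lra | apply ex_RInt_integrand |].
    intros y y_range; apply integrand_nonpos.
    pose proof (cos_between_halves y ltac:(lra)); nra.
  - rewrite (F_Chasles r (2 * PI / 3) b).
    assert (0 <= RInt (integrand r) (2 * PI / 3) b); [|lra].
    apply RInt_ge_0; [lra | apply ex_RInt_integrand |].
    intros y y_range; apply integrand_nonneg.
    pose proof (cos_le_neg_half y ltac:(lra)); nra.
Qed.

Lemma F_nonneg_0_PI (r b : R) : 0 <= r <= 1 -> 0 <= b <= PI -> 0 <= F r b.
Proof.
  intros r_range b_range.
  destruct (Rle_lt_dec b (PI / 3)) as [b_le | b_gt].
  - apply F_nonneg_first_third; lra.
  - pose proof (F_2PI3_nonneg r r_range); pose proof (F_ge_F_2PI3 r b ltac:(lra)); lra.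
Qed.

Lemma F_pos_0_PI (r b : R) : 0 < r <= 1 -> 0 < b <= PI -> 0 < F r b.
Proof.
  intros r_range b_range.
  destruct (Rle_lt_dec b (PI / 3)) as [b_le | b_gt].
  - apply F_pos_first_third; lra.
  - pose proof (F_2PI3_pos r r_range); pose proof (F_ge_F_2PI3 r b ltac:(lra)); lra.
Qed.

Lemma F_0 (r : R) : F r 0 = 0.
Proof. unfold F; apply (RInt_point 0 (integrand r)). Qed.

Theorem lemma1 :
  exists r0 : R, 0 < r0 /\
    (forall r : R, 0 <= r <= r0 -> forall beta : R, 0 <= beta -> 0 <= F r beta) /\
    (forall r : R, 0 < r <= r0 -> forall beta : R, 0 <= beta -> (F r beta = 0 <-> beta = 0)).
Proof.
  pose proof PI_RGT_0.
  exists 1; split; [lra | split].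
  - intros r r_range beta beta_nonneg.
    destruct (Req_dec beta 0) as [-> | beta_ne]; [rewrite F_0; lra|].
    apply (closed_of_period_increment (F r) PI (Rle 0)); try lra.
    + apply F_add_PI.
    + intros x y; apply Rplus_le_le_0_compat.
    + intros b b_range; apply F_nonneg_0_PI; lra.
  - intros r r_range beta beta_nonneg; split; [|intros ->; apply F_0].
    intros F_zero; destruct (Req_dec beta 0) as [beta_0 | beta_ne]; [exact beta_0|].
    enough (0 < F r beta) by lra.
    apply (closed_of_period_increment (F r) PI (Rlt 0)); try lra.
    + apply F_add_PI.
    + intros x y; apply Rplus_lt_0_compat.
    + intros b b_range; apply F_pos_0_PI; lra.
Qed.
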